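(* For all integers $L\ge 0$ and $n\ge 1$, $$S_L(n+1,n)=\frac{n(n+1)}{2}\left[\frac{(n+1)!}{2}\right]^{L}=\left[\frac{(n+1)!}{2}\right]^{L}S_0(n+1,n).$$
   Context: For an integer $L\ge 0$ let ${}_0F_L(z)=\sum_{n=0}^{\infty}\frac{z^n}{(n!)^{L+1}}$. Define the numbers $S_L(n,l)$ ($n,l\ge 0$) by the formal power series identities $\frac{({}_0F_L(z)-1)^l}{l!}=\sum_{n\ge l}\frac{S_L(n,l)}{(n!)^{L+1}}z^n$ for each $l\ge 0$. In particular $S_0(n,l)$ are the Stirling numbers of the second kind. *)

From mathcomp Require Import all_boot all_order all_algebra.
Set Implicit Arguments. Unset Strict Implicit. Unset Printing Implicit Defensive.
Import GRing.Theory Num.Theory.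
Local Open Scope ring_scope.

(* Truncation at degree N of the formal power series
   0F_L(z) = sum_{k>=0} z^k / (k!)^(L+1), as a polynomial over rat. *)
Definition F0L_trunc (L N : nat) : {poly rat} :=
  \poly_(k < N.+1) (((k`!)%:R : rat) ^+ L.+1)^-1.

(* S_L(n,l) := (n!)^(L+1) * [z^n] ( (0F_L(z) - 1)^l / l! ).
   The coefficient of z^n of (0F_L - 1)^l only depends on the terms of
   0F_L of degree <= n, so truncating at degree n is exact. *)
Definition S_L (L n l : nat) : rat :=
  ((n`!)%:R ^+ L.+1) * (((F0L_trunc L n - 1) ^+ l)`_n / (l`!)%:R).

(* Write F := 0F_L.  Since F - 1 = z (1 + z / 2^(L+1) + ...), the coefficient of
   z^(n+1) in (F - 1)^n is that of z in (1 + z / 2^(L+1) + ...)^n, namely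
   n / 2^(L+1).  Hence S_L(n+1,n) = ((n+1)!)^(L+1) n / (2^(L+1) n!), which is
   n(n+1)/2 * ((n+1)!/2)^L. *)
From mathcomp Require Import all_boot all_order all_algebra.
From mathcomp Require Import ring.
Import GRing.Theory Num.Theory.
Local Open Scope ring_scope.

Section PowerCoefficients.
Variable R : comNzRingType.
Implicit Types p q : {poly R}.

Lemma coef1_exp q m : (q ^+ m)`_1 = m%:R * q`_0 ^+ m.-1 * q`_1.
Proof.
elim: m => [|m IH]; first by rewrite expr0 coefC !mul0r.
have coef0X : (q ^+ m)`_0 = q`_0 ^+ m by exact: (rmorphXn (coefp 0)).
rewrite exprSr coefM big_ord_recr big_ord1 /= IH coef0X subnn subn0.
by case: m {IH coef0X} => [|m] /=; rewrite ?exprS -?natr1; ring.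
Qed.

Lemma coefS_exp_coef0_eq0 p m :
  p`_0 = 0 -> (p ^+ m)`_m.+1 = m%:R * p`_1 ^+ m.-1 * p`_2.
Proof.
move=> p0; have pX : p = drop_poly 1 p * 'X.
  by apply/polyP => -[|i]; rewrite coefMX coef_drop_poly // addn1.
rewrite {1}pX exprMn coefMXn ltnNge leqnSn /= subSnn.
by rewrite coef1_exp !coef_drop_poly.
Qed.

End PowerCoefficients.

Lemma coef_F0L_trunc L N k :
  (F0L_trunc L N)`_k = if (k <= N)%N then ((k`!)%:R ^+ L.+1)^-1 else 0.
Proof. by rewrite coef_poly ltnS. Qed.

Lemma S_L_subdiag L n :
  S_L L n.+1 n = ((n * n.+1)%:R / 2) * (((n.+1)`!)%:R / 2) ^+ L.
Proof.
case: n => [|n]; first by rewrite /S_L expr0 coefC /= !mul0r mulr0.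
rewrite /S_L coefS_exp_coef0_eq0; last first.
  by rewrite coefB coef_F0L_trunc coefC /= expr1n invr1 subrr.
rewrite !coefB !coef_F0L_trunc !coefC /= !subr0 expr1n invr1 expr1n mulr1.
rewrite (factS n.+1).
have : (n.+1)`! != 0%N by rewrite -lt0n fact_gt0.
move: (n.+1)`! => k k_neq0.
rewrite !natrM !exprMn !expr1n !mulr1 exprVn !exprS.
by field; rewrite expf_neq0 // pnatr_eq0.
Qed.

Theorem mainTheorem4 (L n : nat) (hn : (1 <= n)%N) :
  S_L L n.+1 n = ((n * n.+1)%:R / 2) * (((n.+1)`!)%:R / 2) ^+ L
  /\ S_L L n.+1 n = (((n.+1)`!)%:R / 2) ^+ L * S_L 0 n.+1 n.
Proof.
(* S_L_subdiag also holds at n = 0. *)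
split; first exact: S_L_subdiag.
by rewrite !S_L_subdiag expr0 mulr1 mulrC.
Qed.
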